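(* Let $q>0$. If there exists $u\in C^{4}(\mathbb{R}^{2})$, $u>0$, solving $\Delta^{2}u+u^{-q}=0$ in $\mathbb{R}^{2}$, then $q>1$. *)

From Stdlib Require Import Reals.
From Coquelicot Require Import Coquelicot.
Open Scope R_scope.

Definition dx (f : R -> R -> R) : R -> R -> R :=
  fun x y => Derive (fun t => f t y) x.
Definition dy (f : R -> R -> R) : R -> R -> R :=
  fun x y => Derive (fun t => f x t) y.

Definition cont2 (f : R -> R -> R) : Prop :=
  forall x y, continuous (fun p : R * R => f (fst p) (snd p)) (x, y).

Fixpoint Ck (k : nat) (f : R -> R -> R) : Prop :=
  cont2 f /\
  match k with
  | O => True
  | S k' =>
      (forall x y, ex_derive (fun t => f t y) x /\ ex_derive (fun t => f x t) y)
      /\ Ck k' (dx f) /\ Ck k' (dy f)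
  end.

Definition lap (f : R -> R -> R) : R -> R -> R :=
  fun x y => dx (dx f) x y + dy (dy f) x y.
Definition bilap (f : R -> R -> R) : R -> R -> R := lap (lap f).

From Stdlib Require Import Reals Lra Psatz FunctionalExtensionality.
From Coquelicot Require Import Coquelicot.
Open Scope R_scope.

(* The proof averages the equation over circles.  For a C^2 function f, the
   circular mean M f r (the integral of f over the circle of radius r) obeys
   the radial Laplace identity (r (M f)')' = r M (lap f), obtained by
   differentiating under the integral sign and integrating the polar form of
   the Laplacian over a period.  Applied to u and lap u it gives
   (r U')' = r W and (r W')' = r Z for U = M u, W = M (lap u),
   Z = M (bilap u), and Jensen's inequality for the convex map x |-> x^(-q)
   turns the equation into Z <= - 2 pi (U / 2 pi)^(-q).
   The section RadialInequality shows that this ODE inequality has no positive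
   solution when q <= 1: W is nonincreasing, W >= 0 (otherwise U would become
   negative), so U grows at most quadratically; then Z decays no faster than
   1 / r^2, which forces W to behave like - a ln r and become negative. *)

Lemma deriv_plus (f g : R -> R) (x a b : R) :
  is_derive f x a -> is_derive g x b -> is_derive (fun t => f t + g t) x (a + b).
Proof.
intros Hf Hg. apply is_derive_Reals.
apply derivable_pt_lim_plus; apply is_derive_Reals; assumption.
Qed.

Lemma deriv_mult (f g : R -> R) (x a b : R) :
  is_derive f x a -> is_derive g x b ->
  is_derive (fun t => f t * g t) x (a * g x + f x * b).
Proof.
intros Hf Hg. apply is_derive_Reals.
apply derivable_pt_lim_mult; apply is_derive_Reals; assumption.
Qed.

Lemma deriv_value (f : R -> R) (x a b : R) : a = b -> is_derive f x a -> is_derive f x b.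
Proof. now intros ->. Qed.

Lemma deriv_mult_const (f : R -> R) (x a c : R) :
  is_derive f x a -> is_derive (fun t => f t * c) x (a * c).
Proof.
intros Hf. eapply deriv_value; [|apply (deriv_mult f (fun _ => c) x a 0); [exact Hf|]].
- ring.
- apply is_derive_Reals, derivable_pt_lim_const.
Qed.

Lemma deriv_mult_id (f : R -> R) (x a : R) :
  is_derive f x a -> is_derive (fun t => t * f t) x (f x + x * a).
Proof.
intros Hf. eapply deriv_value; [|apply (deriv_mult (fun t => t) f x 1 a); [|exact Hf]].
- ring.
- apply is_derive_Reals, derivable_pt_lim_id.
Qed.

Lemma nonincreasing_of_deriv (f f' : R -> R) (a b : R) : a <= b ->
  (forall t, a <= t <= b -> is_derive f t (f' t)) ->
  (forall t, a < t < b -> f' t <= 0) -> f b <= f a.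
Proof.
intros Hab Hd Hneg. destruct (Req_dec a b) as [->|Hne]; [lra|].
destruct (MVT_cor2 f f' a b) as [c [Hc Hac]]; [lra| |].
- intros c Hc. apply is_derive_Reals. auto.
- specialize (Hneg c Hac). nra.
Qed.

Lemma mean_value (g : R -> R) (a b : R) : (forall t, ex_derive g t) ->
  exists c, Rabs (c - a) <= Rabs (b - a) /\ g b - g a = Derive g c * (b - a).
Proof.
intros Hd.
assert (Hg : forall c, derivable_pt_lim g c (Derive g c)).
{ intros c. apply is_derive_Reals, Derive_correct, Hd. }
destruct (Rtotal_order a b) as [Hab|[<-|Hab]].
- destruct (MVT_cor2 g (Derive g) a b) as [c [Hc Hac]]; auto.
  exists c. split; [rewrite !Rabs_pos_eq; lra | exact Hc].
- exists a. split; [lra | ring].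
- destruct (MVT_cor2 g (Derive g) b a) as [c [Hc Hac]]; auto.
  exists c. split; [rewrite !Rabs_left; lra | lra].
Qed.

Lemma Ck_cont (k : nat) (f : R -> R -> R) : Ck k f -> cont2 f.
Proof. destruct k; intros H; apply H. Qed.

Lemma Ck_weaken (k : nat) (f : R -> R -> R) : Ck (S k) f -> Ck k f.
Proof.
revert f; induction k as [|k IH]; intros f [H0 [H1 [H2 H3]]].
- split; [exact H0 | exact I].
- split; [exact H0|]. split; [exact H1|]. split; apply IH; assumption.
Qed.

Lemma cont2_plus (f g : R -> R -> R) :
  cont2 f -> cont2 g -> cont2 (fun x y => f x y + g x y).
Proof.
intros Hf Hg x y.
apply (continuous_plus (fun p : R * R => f (fst p) (snd p)) (fun p => g (fst p) (snd p))); auto.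
Qed.

Lemma Ck_plus (k : nat) (f g : R -> R -> R) :
  Ck k f -> Ck k g -> Ck k (fun x y => f x y + g x y).
Proof.
revert f g; induction k as [|k IH]; intros f g Hf Hg.
- split; [apply cont2_plus; [apply Hf | apply Hg] | exact I].
- destruct Hf as [F0 [F1 [F2 F3]]], Hg as [G0 [G1 [G2 G3]]].
  assert (Edx : dx (fun x y => f x y + g x y) = fun x y => dx f x y + dx g x y).
  { apply functional_extensionality; intro x; apply functional_extensionality; intro y.
    unfold dx; cbv beta.
    rewrite (Derive_plus (fun t => f t y) (fun t => g t y));
      [reflexivity | apply (F1 x y) | apply (G1 x y)]. }
  assert (Edy : dy (fun x y => f x y + g x y) = fun x y => dy f x y + dy g x y).
  { apply functional_extensionality; intro x; apply functional_extensionality; intro y.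
    unfold dy; cbv beta.
    rewrite (Derive_plus (fun t => f x t) (fun t => g x t));
      [reflexivity | apply (F1 x y) | apply (G1 x y)]. }
  split; [apply cont2_plus; assumption|].
  split; [|rewrite Edx, Edy; split; apply IH; assumption].
  intros x y; split.
  + apply (ex_derive_plus (fun t => f t y) (fun t => g t y)); [apply (F1 x y) | apply (G1 x y)].
  + apply (ex_derive_plus (fun t => f x t) (fun t => g x t)); [apply (F1 x y) | apply (G1 x y)].
Qed.

(* Every C^1 function is (Frechet) differentiable, with the partial
   derivatives as gradient: this follows from the mean value theorem applied
   separately in each variable and the continuity of dx f and dy f. *)
Lemma C1_differentiable (f : R -> R -> R) (x y : R) :
  Ck 1 f -> differentiable_pt_lim f x y (dx f x y) (dy f x y).
Proof.
intros [_ [Hd [[Cx _] [Cy _]]]] eps.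
destruct (proj2 (continuity_2d_pt_filterlim _ _ _) (Cx x y) (pos_div_2 eps)) as [d1 D1].
destruct (proj2 (continuity_2d_pt_filterlim _ _ _) (Cy x y) (pos_div_2 eps)) as [d2 D2].
assert (Hd12 : 0 < Rmin d1 d2) by (apply Rmin_pos; apply cond_pos).
exists (mkposreal _ Hd12). intros u v Hu Hv; simpl in Hu, Hv.
pose proof (Rmin_l d1 d2); pose proof (Rmin_r d1 d2).
destruct (mean_value (fun t => f t v) x u) as [c1 [Hc1 E1]]; [intros t; exact (proj1 (Hd t v))|].
destruct (mean_value (fun t => f x t) y v) as [c2 [Hc2 E2]]; [intros t; exact (proj2 (Hd x t))|].
assert (A1 : Rabs (dx f c1 v - dx f x y) < eps / 2) by (apply D1; simpl; lra).
assert (A2 : Rabs (dy f x c2 - dy f x y) < eps / 2).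
{ apply D2; simpl; [rewrite Rminus_diag, Rabs_R0; apply cond_pos | lra]. }
unfold dx, dy in *.
replace (f u v - f x y - (Derive (fun t => f t y) x * (u - x) + Derive (fun t => f x t) y * (v - y)))
  with ((Derive (fun t => f t v) c1 - Derive (fun t => f t y) x) * (u - x)
        + (Derive (fun t => f x t) c2 - Derive (fun t => f x t) y) * (v - y)) by lra.
eapply Rle_trans; [apply Rabs_triang|]. rewrite !Rabs_mult.
assert (B1 := Rmult_le_compat _ _ _ _ (Rabs_pos _) (Rabs_pos _) (Rlt_le _ _ A1)
                (Rmax_l (Rabs (u - x)) (Rabs (v - y)))).
assert (B2 := Rmult_le_compat _ _ _ _ (Rabs_pos _) (Rabs_pos _) (Rlt_le _ _ A2)
                (Rmax_r (Rabs (u - x)) (Rabs (v - y)))).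
lra.
Qed.

Lemma chain_rule (f : R -> R -> R) (X Y : R -> R) (t a b : R) :
  Ck 1 f -> is_derive X t a -> is_derive Y t b ->
  is_derive (fun s => f (X s) (Y s)) t (dx f (X t) (Y t) * a + dy f (X t) (Y t) * b).
Proof.
intros Hf HX HY. apply is_derive_Reals, derivable_pt_lim_comp_2d.
- apply C1_differentiable, Hf.
- apply is_derive_Reals, HX.
- apply is_derive_Reals, HY.
Qed.

Lemma lap_cont (f : R -> R -> R) : Ck 2 f -> cont2 (lap f).
Proof.
intros [_ [_ [[_ [_ [Hxx _]]] [_ [_ [_ Hyy]]]]]].
apply cont2_plus; [apply Hxx | apply Hyy].
Qed.

(* For g on R^2, [polar g r t] is g at the point with
   polar coordinates (r, t); [radial f] is the radial derivative of
   [polar f], [radial2 f] the second radial derivative, and [angular f] the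
   angular derivative of [polar f] divided by r. *)

Definition polar (g : R -> R -> R) (r t : R) : R := g (r * cos t) (r * sin t).
Definition radial (f : R -> R -> R) (r t : R) : R :=
  polar (dx f) r t * cos t + polar (dy f) r t * sin t.
Definition radial2 (f : R -> R -> R) (r t : R) : R :=
  radial (dx f) r t * cos t + radial (dy f) r t * sin t.
Definition angular (f : R -> R -> R) (r t : R) : R :=
  - sin t * polar (dx f) r t + cos t * polar (dy f) r t.

Lemma cont2d_cos (r t : R) : continuity_2d_pt (fun _ s => cos s) r t.
Proof.
apply (continuity_1d_2d_pt_comp cos (fun _ s => s));
  [apply continuity_cos | apply continuity_2d_pt_id2].
Qed.

Lemma cont2d_sin (r t : R) : continuity_2d_pt (fun _ s => sin s) r t.
Proof.
apply (continuity_1d_2d_pt_comp sin (fun _ s => s));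
  [apply continuity_sin | apply continuity_2d_pt_id2].
Qed.

Lemma polar_cont (g : R -> R -> R) (r t : R) : cont2 g -> continuity_2d_pt (polar g) r t.
Proof.
intros Hg. apply continuity_2d_pt_filterlim.
apply (continuous_comp_2 (fun p : R * R => fst p * cos (snd p))
         (fun p : R * R => fst p * sin (snd p)) g).
- apply (continuity_2d_pt_filterlim (fun u v => u * cos v)).
  apply continuity_2d_pt_mult; [apply continuity_2d_pt_id1 | apply cont2d_cos].
- apply (continuity_2d_pt_filterlim (fun u v => u * sin v)).
  apply continuity_2d_pt_mult; [apply continuity_2d_pt_id1 | apply cont2d_sin].
- apply Hg.
Qed.

Lemma radial_cont (f : R -> R -> R) (r t : R) : Ck 1 f -> continuity_2d_pt (radial f) r t.
Proof.
intros [_ [_ [[Hx _] [Hy _]]]].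
apply continuity_2d_pt_plus; apply continuity_2d_pt_mult;
  auto using polar_cont, cont2d_cos, cont2d_sin.
Qed.

Lemma radial2_cont (f : R -> R -> R) (r t : R) : Ck 2 f -> continuity_2d_pt (radial2 f) r t.
Proof.
intros [_ [_ [Hx Hy]]].
apply continuity_2d_pt_plus; apply continuity_2d_pt_mult;
  auto using radial_cont, cont2d_cos, cont2d_sin.
Qed.

Lemma polar_deriv_r (f : R -> R -> R) (r t : R) :
  Ck 1 f -> is_derive (fun s => polar f s t) r (radial f r t).
Proof.
intros Hf. apply (chain_rule f (fun s => s * cos t) (fun s => s * sin t) r); [exact Hf | |].
- auto_derive; [exact I | ring].
- auto_derive; [exact I | ring].
Qed.

Lemma radial_deriv_r (f : R -> R -> R) (r t : R) :
  Ck 2 f -> is_derive (fun s => radial f s t) r (radial2 f r t).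
Proof.
intros [_ [_ [Hx Hy]]].
change (is_derive (fun s => polar (dx f) s t * cos t + polar (dy f) s t * sin t) r
          (radial (dx f) r t * cos t + radial (dy f) r t * sin t)).
apply deriv_plus; apply deriv_mult_const, polar_deriv_r; assumption.
Qed.

(* The angular derivative of the angular field computes the Laplacian:
   d/dt (angular f r t) = r (lap f) - radial f - r radial2 f, the polar form of
   the Laplace operator. *)
Lemma angular_deriv_t (f : R -> R -> R) (r t : R) :
  Ck 2 f -> is_derive (fun s => angular f r s) t
    (r * polar (lap f) r t - radial f r t - r * radial2 f r t).
Proof.
intros [_ [_ [Hx Hy]]].
assert (HX : is_derive (fun s => r * cos s) t (r * - sin t)) by (auto_derive; [exact I | ring]).
assert (HY : is_derive (fun s => r * sin s) t (r * cos t)) by (auto_derive; [exact I | ring]).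
assert (Hsin : is_derive (fun s => - sin s) t (- cos t)) by (auto_derive; [exact I | ring]).
assert (Hcos : is_derive cos t (- sin t)) by (auto_derive; [exact I | ring]).
unfold angular, polar.
eapply deriv_value; [|apply deriv_plus;
  [ apply (deriv_mult (fun s => - sin s)); [exact Hsin | exact (chain_rule (dx f) _ _ t _ _ Hx HX HY)]
  | apply deriv_mult; [exact Hcos | exact (chain_rule (dy f) _ _ t _ _ Hy HX HY)]]].
assert (Hpyth : sin t ^ 2 + cos t ^ 2 = 1) by (rewrite <- (sin2_cos2 t); unfold Rsqr; ring).
unfold radial2, radial, polar, lap.
replace (r * (dx (dx f) (r * cos t) (r * sin t) + dy (dy f) (r * cos t) (r * sin t)))
  with (r * (dx (dx f) (r * cos t) (r * sin t) + dy (dy f) (r * cos t) (r * sin t))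
        * (sin t ^ 2 + cos t ^ 2)) by (rewrite Hpyth; ring).
ring.
Qed.

Lemma RInt_Rminus (f g : R -> R) (a b : R) : ex_RInt f a b -> ex_RInt g a b ->
  RInt (fun t => f t - g t) a b = RInt f a b - RInt g a b.
Proof. exact (RInt_minus f g a b). Qed.

Lemma RInt_Rscal (f : R -> R) (a b c : R) : ex_RInt f a b ->
  RInt (fun t => c * f t) a b = c * RInt f a b.
Proof. exact (RInt_scal f a b c). Qed.

Lemma RInt_Rconst (a b c : R) : RInt (fun _ => c) a b = (b - a) * c.
Proof. exact (RInt_const a b c). Qed.

Lemma continuous_section (F : R -> R -> R) (r t : R) :
  continuity_2d_pt F r t -> continuous (fun s => F r s) t.
Proof.
intros HF. apply (continuous_comp_2 (fun _ : R => r) (fun s : R => s) F);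
  [apply continuous_const | apply continuous_id | apply continuity_2d_pt_filterlim, HF].
Qed.

Lemma integrable_of_cont2d (F : R -> R -> R) (r a b : R) :
  (forall z t, continuity_2d_pt F z t) -> ex_RInt (fun t => F r t) a b.
Proof.
intros HF. apply (ex_RInt_continuous (V := R_CompleteNormedModule)).
intros t _. apply continuous_section, HF.
Qed.

Lemma deriv_param_integral (F F' : R -> R -> R) (r : R) :
  (forall z t, is_derive (fun s => F s t) z (F' z t)) ->
  (forall z t, continuity_2d_pt F' z t) -> (forall z t, continuity_2d_pt F z t) ->
  is_derive (fun z => RInt (fun t => F z t) 0 (2 * PI)) r (RInt (fun t => F' r t) 0 (2 * PI)).
Proof.
intros Hd HF' HF.
eapply deriv_value; [|apply (is_derive_RInt_param F 0 (2 * PI) r)].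
- apply RInt_ext. intros t _. apply is_derive_unique, Hd.
- apply filter_forall. intros z t _. eexists. apply Hd.
- intros t _. apply (continuity_2d_pt_ext F'); [|apply HF'].
  intros x y. symmetry. apply is_derive_unique, Hd.
- apply filter_forall. intros z. apply integrable_of_cont2d, HF.
Qed.

(* Circular means.  [circ_mean g r] is the integral of g over the circle of
   radius r (2 pi times the mean value), [mean_radial f r] the integral of the
   radial derivative of f over it. *)

Definition circ_mean (g : R -> R -> R) (r : R) : R := RInt (fun t => polar g r t) 0 (2 * PI).
Definition mean_radial (f : R -> R -> R) (r : R) : R := RInt (fun t => radial f r t) 0 (2 * PI).

Lemma circ_mean_deriv (f : R -> R -> R) (r : R) :
  Ck 1 f -> is_derive (circ_mean f) r (mean_radial f r).
Proof.
intros Hf. apply (deriv_param_integral (polar f) (radial f)).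
- intros z t. apply polar_deriv_r, Hf.
- intros z t. apply radial_cont, Hf.
- intros z t. apply polar_cont, (Ck_cont 1), Hf.
Qed.

Lemma mean_radial_deriv (f : R -> R -> R) (r : R) :
  Ck 2 f -> is_derive (mean_radial f) r (RInt (fun t => radial2 f r t) 0 (2 * PI)).
Proof.
intros Hf. apply (deriv_param_integral (radial f) (radial2 f)).
- intros z t. apply radial_deriv_r, Hf.
- intros z t. apply radial2_cont, Hf.
- intros z t. apply radial_cont, Ck_weaken, Hf.
Qed.

(* Integrating the polar form of the Laplacian over a period: the angular
   term integrates to zero by periodicity. *)
Lemma mean_laplacian (f : R -> R -> R) (r : R) : Ck 2 f ->
  mean_radial f r + r * RInt (fun t => radial2 f r t) 0 (2 * PI) = r * circ_mean (lap f) r.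
Proof.
intros Hf.
assert (C0 : forall z t, continuity_2d_pt (polar (lap f)) z t)
  by (intros; apply polar_cont, lap_cont, Hf).
assert (C1 : forall z t, continuity_2d_pt (radial f) z t)
  by (intros; apply radial_cont, Ck_weaken, Hf).
assert (C2 : forall z t, continuity_2d_pt (radial2 f) z t) by (intros; apply radial2_cont, Hf).
assert (Cl : forall z t, continuity_2d_pt
          (fun z t => z * polar (lap f) z t - radial f z t - z * radial2 f z t) z t).
{ intros z t. repeat apply continuity_2d_pt_minus; try apply continuity_2d_pt_mult;
    auto using continuity_2d_pt_id1. }
assert (Hzero : RInt (fun t => r * polar (lap f) r t - radial f r t - r * radial2 f r t)
                  0 (2 * PI) = 0).
{ rewrite (is_RInt_unique _ _ _ _ (is_RInt_derive (fun s => angular f r s) _ 0 (2 * PI)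
    (fun t _ => angular_deriv_t f r t Hf)
    (fun t _ => continuous_section _ r t (Cl r t)))).
  unfold angular, polar. rewrite cos_2PI, sin_2PI, cos_0, sin_0. exact (minus_eq_zero _). }
assert (I0 := integrable_of_cont2d _ r 0 (2 * PI) C0).
assert (I1 := integrable_of_cont2d _ r 0 (2 * PI) C1).
assert (I2 := integrable_of_cont2d _ r 0 (2 * PI) C2).
assert (I0' : ex_RInt (fun t => r * polar (lap f) r t) 0 (2 * PI)).
{ apply (integrable_of_cont2d (fun z t => z * polar (lap f) z t)). intros z t.
  apply continuity_2d_pt_mult; auto using continuity_2d_pt_id1. }
assert (I2' : ex_RInt (fun t => r * radial2 f r t) 0 (2 * PI)).
{ apply (integrable_of_cont2d (fun z t => z * radial2 f z t)). intros z t.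
  apply continuity_2d_pt_mult; auto using continuity_2d_pt_id1. }
assert (I01 : ex_RInt (fun t => r * polar (lap f) r t - radial f r t) 0 (2 * PI)).
{ apply (integrable_of_cont2d (fun z t => z * polar (lap f) z t - radial f z t)). intros z t.
  apply continuity_2d_pt_minus; [apply continuity_2d_pt_mult|]; auto using continuity_2d_pt_id1. }
rewrite (RInt_Rminus _ _ _ _ I01 I2'), (RInt_Rminus _ _ _ _ I0' I1) in Hzero.
rewrite (RInt_Rscal _ _ _ _ I0), (RInt_Rscal _ _ _ _ I2) in Hzero.
unfold mean_radial, circ_mean. lra.
Qed.

Lemma circ_mean_laplace (f : R -> R -> R) (r : R) :
  Ck 2 f -> is_derive (fun s => s * mean_radial f s) r (r * circ_mean (lap f) r).
Proof.
intros Hf. eapply deriv_value; [apply mean_laplacian, Hf|].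
apply deriv_mult_id, mean_radial_deriv, Hf.
Qed.

Lemma circ_mean_pos (u : R -> R -> R) (r : R) :
  cont2 u -> (forall x y, 0 < u x y) -> 0 < circ_mean u r.
Proof.
intros Hc Hpos. apply RInt_gt_0; [pose proof PI_RGT_0; lra | |].
- intros t _. apply Hpos.
- intros t _. apply continuous_section, polar_cont, Hc.
Qed.

(* The convex function x |-> x^(-q) lies above its tangent line at m > 0. *)
Lemma rpower_tangent (q x m : R) : 0 < q -> 0 < x -> 0 < m ->
  Rpower m (- q) * (1 + q - q * x / m) <= Rpower x (- q).
Proof.
intros Hq Hx Hm.
assert (Hxm : 0 < x / m) by (apply Rdiv_lt_0_compat; assumption).
assert (E : Rpower x (- q) = Rpower m (- q) * Rpower (x / m) (- q)).
{ rewrite Rpower_mult_distr by assumption. f_equal. field. lra. }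
rewrite E. apply Rmult_le_compat_l; [left; apply exp_pos|].
unfold Rpower. eapply Rle_trans; [|apply exp_ineq1_le].
assert (Hln : ln (x / m) <= x / m - 1).
{ pose proof (exp_ineq1_le (ln (x / m))) as H. rewrite exp_ln in H by exact Hxm. lra. }
unfold Rdiv in *. nra.
Qed.

(* Jensen's inequality for circular means: if b <= - u^(-q) pointwise, then
   M b <= - 2 pi (M u / 2 pi)^(-q), by integrating the tangent inequality at
   the mean value m = M u / 2 pi. *)
Lemma circ_mean_jensen (q : R) (u b : R -> R -> R) (r : R) :
  0 < q -> cont2 u -> cont2 b -> (forall x y, 0 < u x y) ->
  (forall x y, b x y <= - Rpower (u x y) (- q)) ->
  circ_mean b r <= - (2 * PI) * Rpower (circ_mean u r / (2 * PI)) (- q).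
Proof.
intros Hq Hu Hb Hpos Hbound.
assert (H2PI : 0 < 2 * PI) by (pose proof PI_RGT_0; lra).
set (m := circ_mean u r / (2 * PI)).
assert (Hm : 0 < m) by (apply Rdiv_lt_0_compat; [apply circ_mean_pos|]; assumption).
set (A := Rpower m (- q)).
assert (Iu := integrable_of_cont2d (polar u) r 0 (2 * PI) (fun z t => polar_cont u z t Hu)).
assert (Iau : ex_RInt (fun t => A * q / m * polar u r t) 0 (2 * PI)).
{ apply (integrable_of_cont2d (fun z t => A * q / m * polar u z t)). intros z t.
  apply continuity_2d_pt_mult; [apply continuity_2d_pt_const | apply polar_cont, Hu]. }
assert (Ic : ex_RInt (fun _ => A * (1 + q)) 0 (2 * PI)) by apply ex_RInt_const.
assert (Hle : circ_mean b r <= RInt (fun t => A * q / m * polar u r t - A * (1 + q)) 0 (2 * PI)).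
{ apply RInt_le; [lra | apply integrable_of_cont2d; intros; apply polar_cont, Hb
                 | apply (ex_RInt_minus (V := R_NormedModule)); assumption |].
  intros t _. pose proof (Hbound (r * cos t) (r * sin t)) as Hbt.
  pose proof (rpower_tangent q (polar u r t) m Hq (Hpos _ _) Hm) as Htan.
  assert (E : - (A * (1 + q - q * polar u r t / m)) = A * q / m * polar u r t - A * (1 + q))
    by (field; lra).
  change (Rpower m (- q)) with A in Htan. unfold polar in *. lra. }
rewrite (RInt_Rminus _ _ _ _ Iau Ic), (RInt_Rscal _ _ _ _ Iu), RInt_Rconst in Hle.
fold (circ_mean u r) in Hle.
replace (circ_mean u r) with (m * (2 * PI)) in Hle by (unfold m; field; lra).
replace (A * q / m * (m * (2 * PI))) with (A * q * (2 * PI)) in Hle by (field; lra).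
fold A. lra.
Qed.

(* For 0 < q <= 1 the power y^(-q) dominates 1/B whenever 0 < y <= B and B >= 1;
   this is where the hypothesis q <= 1 enters. *)
Lemma rpower_neg_lower (q y B : R) :
  0 < q -> q <= 1 -> 0 < y -> y <= B -> 1 <= B -> / B <= Rpower y (- q).
Proof.
intros Hq Hq1 Hy HyB HB. unfold Rpower.
rewrite <- (exp_ln B), <- exp_Ropp by lra.
assert (HlnB : 0 <= ln B) by (rewrite <- ln_1; apply ln_le; lra).
assert (Hln : ln y <= ln B) by (apply ln_le; lra).
destruct (Req_dec (- ln B) (- q * ln y)) as [E|]; [rewrite E; lra|].
left. apply exp_increasing. nra.
Qed.

(* Here U, W, Z stand for the circular means of
   u, lap u and bilap u, and U1, W1 for the radial derivatives of U and W, so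
   that (r U1)' = r W and (r W1)' = r Z, while Jensen's inequality gives
   Z <= - K (U / L)^(-q). *)
Section RadialInequality.

Variables (q K L : R) (U U1 W W1 Z : R -> R).
Hypotheses (Hq : 0 < q) (Hq1 : q <= 1) (HK : 0 < K) (HL : 0 < L).
Hypothesis U_deriv : forall r, is_derive U r (U1 r).
Hypothesis rU1_deriv : forall r, is_derive (fun s => s * U1 s) r (r * W r).
Hypothesis W_deriv : forall r, is_derive W r (W1 r).
Hypothesis rW1_deriv : forall r, is_derive (fun s => s * W1 s) r (r * Z r).
Hypothesis U_pos : forall r, 0 < U r.
Hypothesis Z_bound : forall r, Z r <= - K * Rpower (U r / L) (- q).

Lemma Z_neg (r : R) : Z r < 0.
Proof.
pose proof (exp_pos (- q * ln (U r / L))) as Hp. specialize (Z_bound r).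
unfold Rpower in Z_bound. nra.
Qed.

(* r W1 vanishes at 0 and decreases, so W is nonincreasing on [0, +oo). *)
Lemma W_nonincreasing (a b : R) : 0 <= a <= b -> W b <= W a.
Proof.
intros Hab.
assert (rW1_nonpos : forall r, 0 <= r -> r * W1 r <= 0).
{ intros r Hr. enough (r * W1 r <= 0 * W1 0) by lra.
  apply (nonincreasing_of_deriv (fun s => s * W1 s) (fun s => s * Z s));
    [exact Hr | intros; apply rW1_deriv | intros t Ht].
  pose proof (Z_neg t). nra. }
apply (nonincreasing_of_deriv W W1); [lra | intros; apply W_deriv | intros r Hr].
pose proof (rW1_nonpos r ltac:(lra)). nra.
Qed.

(* If W stayed below -c < 0 beyond r1 >= 1, then U would decrease at least
   quadratically and eventually become negative. *)
Lemma U_eventually_negative (c r1 : R) : 0 < c -> 1 <= r1 ->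
  (forall s, r1 <= s -> W s <= - c) -> exists s, U s < 0.
Proof.
intros Hc Hr1 HW.
set (Psi := r1 * U1 r1 + c / 2 * (r1 * r1)).
assert (rU1_bound : forall s, r1 <= s -> s * U1 s + c / 2 * (s * s) <= Psi).
{ intros s Hs.
  apply (nonincreasing_of_deriv (fun s => s * U1 s + c / 2 * (s * s)) (fun s => s * W s + c * s));
    [exact Hs | intros t _ | intros t Ht].
  - apply deriv_plus; [apply rU1_deriv | auto_derive; [exact I | field]].
  - pose proof (HW t ltac:(lra)). nra. }
assert (U1_bound : forall s, r1 <= s -> U1 s <= Rabs Psi - c / 2 * s).
{ intros s Hs. pose proof (rU1_bound s Hs). pose proof (Rle_abs Psi).
  assert (Rabs Psi <= s * Rabs Psi) by (pose proof (Rabs_pos Psi); nra).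
  apply (Rmult_le_reg_l s); [lra|]. nra. }
set (A := U r1 - Rabs Psi * r1 + c / 4 * (r1 * r1)).
assert (U_bound : forall s, r1 <= s -> U s <= A + Rabs Psi * s - c / 4 * (s * s)).
{ intros s Hs.
  enough (U s - Rabs Psi * s + c / 4 * (s * s) <= A) by lra.
  apply (nonincreasing_of_deriv (fun s => U s - Rabs Psi * s + c / 4 * (s * s))
           (fun s => U1 s - Rabs Psi + c / 2 * s)); [exact Hs | intros t _ | intros t Ht].
  - apply deriv_plus; [|auto_derive; [exact I | field]].
    apply (deriv_plus U (fun s => - (Rabs Psi * s))); [apply U_deriv | auto_derive; [exact I | ring]].
  - pose proof (U1_bound t ltac:(lra)). lra. }
set (s := r1 + 4 * (Rabs A + Rabs Psi + 1) / c).
assert (Hs : r1 <= s).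
{ unfold s. pose proof (Rabs_pos A); pose proof (Rabs_pos Psi).
  enough (0 <= 4 * (Rabs A + Rabs Psi + 1) / c) by lra.
  apply Rle_mult_inv_pos; lra. }
assert (Hcs : Rabs A + Rabs Psi + 1 <= c / 4 * s).
{ unfold s. replace (c / 4 * (r1 + 4 * (Rabs A + Rabs Psi + 1) / c))
    with (c / 4 * r1 + (Rabs A + Rabs Psi + 1)) by (field; lra). nra. }
exists s. pose proof (U_bound s Hs). pose proof (Rle_abs A).
assert (s * (Rabs A + Rabs Psi + 1) <= s * (c / 4 * s)) by (apply Rmult_le_compat_l; lra).
assert (Rabs A <= s * Rabs A) by (pose proof (Rabs_pos A); nra).
nra.
Qed.

Lemma W_nonneg (r : R) : 0 <= r -> 0 <= W r.
Proof.
intros Hr. destruct (Rle_or_lt 0 (W r)) as [|Hneg]; [assumption | exfalso].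
destruct (U_eventually_negative (- W (r + 1)) (r + 1)) as [s Hs].
- pose proof (W_nonincreasing r (r + 1) ltac:(lra)). lra.
- lra.
- intros s Hs. pose proof (W_nonincreasing (r + 1) s ltac:(lra)). lra.
- pose proof (U_pos s). lra.
Qed.

(* Since W <= W 0, the mean U grows at most quadratically. *)
Lemma U_quadratic (r : R) : 0 <= r -> U r <= U 0 + W 0 / 4 * (r * r).
Proof.
intros Hr.
assert (rU1_bound : forall s, 0 <= s -> s * U1 s <= W 0 / 2 * (s * s)).
{ intros s Hs. enough (s * U1 s - W 0 / 2 * (s * s) <= 0 * U1 0 - W 0 / 2 * (0 * 0)) by lra.
  apply (nonincreasing_of_deriv (fun s => s * U1 s - W 0 / 2 * (s * s))
           (fun s => s * W s - W 0 * s)); [exact Hs | intros t _ | intros t Ht].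
  - apply (deriv_plus (fun s => s * U1 s)); [apply rU1_deriv | auto_derive; [exact I | field]].
  - pose proof (W_nonincreasing 0 t ltac:(lra)). nra. }
enough (U r - W 0 / 4 * (r * r) <= U 0 - W 0 / 4 * (0 * 0)) by lra.
apply (nonincreasing_of_deriv (fun s => U s - W 0 / 4 * (s * s)) (fun s => U1 s - W 0 / 2 * s));
  [exact Hr | intros t _ | intros t Ht].
- apply (deriv_plus U); [apply U_deriv | auto_derive; [exact I | field]].
- pose proof (rU1_bound t ltac:(lra)).
  apply (Rmult_le_reg_l t); [lra | nra].
Qed.

(* With q <= 1, the quadratic growth of U forces Z to decay no faster than
   1 / r^2. *)
Lemma Z_decay : exists a, 0 < a /\ forall r, 0 <= r -> Z r <= - (2 * a) / (1 + r * r).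
Proof.
pose proof (U_pos 0). pose proof (W_nonneg 0 (Rle_refl 0)).
set (C := (U 0 + W 0) / L + 1).
assert (HC : 1 <= C).
{ enough (0 <= (U 0 + W 0) / L) by (unfold C; lra). apply Rle_mult_inv_pos; lra. }
exists (K / (2 * C)). split; [apply Rdiv_lt_0_compat; lra|].
intros r Hr.
assert (HB : 1 <= C * (1 + r * r)) by nra.
assert (Hy : U r / L <= C * (1 + r * r)).
{ pose proof (U_quadratic r Hr). unfold C.
  apply (Rmult_le_reg_l L); [exact HL|].
  replace (L * (U r / L)) with (U r) by (field; lra).
  replace (L * (((U 0 + W 0) / L + 1) * (1 + r * r)))
    with ((U 0 + W 0) * (1 + r * r) + L * (1 + r * r)) by (field; lra).
  nra. }
assert (Hpow := rpower_neg_lower q (U r / L) (C * (1 + r * r)) Hq Hq1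
                  ltac:(apply Rdiv_lt_0_compat; auto) Hy HB).
replace (- (2 * (K / (2 * C))) / (1 + r * r)) with (- K * / (C * (1 + r * r))) by (field; nra).
pose proof (Z_bound r). nra.
Qed.

(* Integrating (r W1)' = r Z against this decay: r W1 <= - a ln (1 + r^2),
   hence W1 <= - a / r for r >= 2. *)
Lemma W1_decay (a : R) : 0 < a ->
  (forall r, 0 <= r -> Z r <= - (2 * a) / (1 + r * r)) ->
  forall r, 2 <= r -> W1 r <= - a / r.
Proof.
intros Ha HZ r Hr.
assert (HrW1 : r * W1 r + a * ln (1 + r * r) <= 0 * W1 0 + a * ln (1 + 0 * 0)).
{ apply (nonincreasing_of_deriv (fun s => s * W1 s + a * ln (1 + s * s))
           (fun s => s * Z s + a * (2 * s) / (1 + s * s))); [lra | intros t _ | intros t Ht].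
  - apply deriv_plus; [apply rW1_deriv | auto_derive; [nra | field; nra]].
  - pose proof (HZ t ltac:(lra)) as Hz.
    replace (a * (2 * t) / (1 + t * t)) with (- t * (- (2 * a) / (1 + t * t))) by (field; nra).
    nra. }
rewrite Rmult_0_r, Rplus_0_r, ln_1 in HrW1.
assert (Hln : 1 <= ln (1 + r * r)).
{ rewrite <- ln_exp at 1. apply ln_le; [apply exp_pos|].
  pose proof exp_le_3. nra. }
apply (Rmult_le_reg_l r); [lra|].
replace (r * (- a / r)) with (- a) by (field; lra). nra.
Qed.

(* Therefore W decreases like - a ln r and becomes negative, contradicting
   W >= 0: the inequality has no positive solution when q <= 1. *)
Lemma radial_inequality_unsolvable : False.
Proof.
destruct Z_decay as [a [Ha HZ]].
assert (W_log : forall s, 2 <= s -> W s + a * ln s <= W 2 + a * ln 2).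
{ intros s Hs.
  apply (nonincreasing_of_deriv (fun s => W s + a * ln s) (fun s => W1 s + a / s));
    [exact Hs | intros t Ht | intros t Ht].
  - apply deriv_plus; [apply W_deriv | auto_derive; [lra | field; lra]].
  - pose proof (W1_decay a Ha HZ t ltac:(lra)). lra. }
set (T := (W 2 + a * ln 2 + 1) / a).
set (s := 2 + exp T).
assert (Hs : 2 <= s) by (unfold s; pose proof (exp_pos T); lra).
assert (HT : T < ln s).
{ rewrite <- (ln_exp T) at 1. apply ln_increasing; [apply exp_pos | unfold s; lra]. }
assert (HaT : a * T = W 2 + a * ln 2 + 1) by (unfold T; field; lra).
pose proof (W_log s Hs). pose proof (W_nonneg s ltac:(lra)).
nra.
Qed.

End RadialInequality.

Theorem mainTheorem15 (q : R) (hq : 0 < q) :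
  (exists u : R -> R -> R,
      Ck 4 u /\
      (forall x y, 0 < u x y) /\
      (forall x y, bilap u x y + Rpower (u x y) (- q) = 0)) ->
  1 < q.
Proof.
intros [u [Hu [Hpos Heq]]].
destruct (Rle_or_lt q 1) as [Hq1 | Hq1]; [exfalso | exact Hq1].
assert (Hu2 : Ck 2 u) by (do 2 apply Ck_weaken; exact Hu).
assert (Hlap2 : Ck 2 (lap u)).
{ destruct Hu as [_ [_ [[_ [_ [Hxx _]]] [_ [_ [_ Hyy]]]]]].
  exact (Ck_plus 2 _ _ Hxx Hyy). }
assert (H2PI : 0 < 2 * PI) by (pose proof PI_RGT_0; lra).
apply (radial_inequality_unsolvable q (2 * PI) (2 * PI) (circ_mean u) (mean_radial u)
         (circ_mean (lap u)) (mean_radial (lap u)) (circ_mean (bilap u)) hq Hq1 H2PI H2PI).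
- intros r. apply circ_mean_deriv, Ck_weaken, Hu2.
- intros r. apply circ_mean_laplace, Hu2.
- intros r. apply circ_mean_deriv, Ck_weaken, Hlap2.
- intros r. apply circ_mean_laplace, Hlap2.
- intros r. apply circ_mean_pos; [apply (Ck_cont 2), Hu2 | exact Hpos].
- intros r. apply circ_mean_jensen; [exact hq | apply (Ck_cont 2), Hu2 | apply lap_cont, Hlap2
                                   | exact Hpos | intros x y; specialize (Heq x y); lra].
Qed.
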